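(* Inner Nonlinear Markov Rewards (INMR), Inner Multi-Objective RL (IMORL) and Functions from Trajectories to Reals (FTR) are equally expressive: $\mathrm{INMR}\sim_{\mathrm{EXPR}}\mathrm{IMORL}\sim_{\mathrm{EXPR}}\mathrm{FTR}$. That is, for every environment $E$, $\mathrm{Ord}_{\mathrm{INMR}}(E)=\mathrm{Ord}_{\mathrm{IMORL}}(E)=\mathrm{Ord}_{\mathrm{FTR}}(E)$.
   Context: An environment is a tuple $E=(\mathcal S,\mathcal A,\mathcal T,\mathcal I)$ where $\mathcal S,\mathcal A$ are finite nonempty sets, $\mathcal T:\mathcal S\times\mathcal A\to\Delta(\mathcal S)$ and $\mathcal I\in\Delta(\mathcal S)$. A policy is a map $\pi:\mathcal S\to\Delta(\mathcal A)$ (stationary, possibly stochastic); $\Pi^E$ denotes the set of all policies. A trajectory is an infinite sequence $\xi=(s_0,a_0,s_1,a_1,\dots)\in\Xi:=\mathcal S\times(\mathcal A\times\mathcal S)^\omega$; under a policy $\pi$ it is generated by $s_0\sim\mathcal I$, $a_t\sim\pi(s_t)$, $s_{t+1}\sim\mathcal T(s_t,a_t)$, and $\mathbb E^\pi_\xi$, $\mathbb P^\pi$ denote expectation and probability under this distribution. An objective-specification formalism $X$ assigns to each environment $E$ a set of objective specifications, each of which induces a total preorder (transitive and strongly connected relation) $\succeq$ on $\Pi^E$; $\mathrm{Ord}_X(E)$ is the set of total preorders so induced. When a specification defines a scalar $J:\Pi^E\to\mathbb R$, it induces $\pi_1\succeq\pi_2\iff J(\pi_1)\ge J(\pi_2)$.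 We write $X\succeq_{\mathrm{EXPR}}Y$ iff $\mathrm{Ord}_Y(E)\subseteq\mathrm{Ord}_X(E)$ for every environment $E$, and $X\sim_{\mathrm{EXPR}}Y$ iff $X\succeq_{\mathrm{EXPR}}Y$ and $Y\succeq_{\mathrm{EXPR}}X$. For functions of trajectories below, functions are assumed Borel measurable (with the product topology on $\Xi$) and a specification is admissible only if all expectations appearing in its $J$ are well-defined and finite for every policy. INMR: a specification is $(\mathcal R,f,\gamma)$ with $\mathcal R:\mathcal S\times\mathcal A\times\mathcal S\to\mathbb R$, $f:\mathbb R\to\mathbb R$, $\gamma\in[0,1)$, and $J(\pi)=\mathbb E^\pi_\xi\big[f\big(\sum_{t=0}^\infty\gamma^t\mathcal R(s_t,a_t,s_{t+1})\big)\big]$. IMORL: a specification is $(k,\mathcal R,f,\gamma)$ with $k\in\mathbb N$, $\mathcal R:\mathcal S\times\mathcal A\times\mathcal S\to\mathbb R^k$ with components $\mathcal R_i$, $f:\mathbb R^k\to\mathbb R$, $\gamma\in[0,1)$, and $J(\pi)=\mathbb E^\pi_\xi[f(G_1(\xi),\dots,G_k(\xi))]$ where $G_i(\xi)=\sum_{t=0}^\infty\gamma^t\mathcal R_i(s_t,a_t,s_{t+1})$. FTR: a specification is $(f)$ with $f:\Xi\to\mathbb R$ and $J(\pi)=\mathbb E^\pi_\xi[f(\xi)]$. *)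

From HB Require Import structures.
From mathcomp Require Import all_boot all_order all_algebra.
From mathcomp Require Import all_classical all_reals all_analysis.
Import Order.TTheory GRing.Theory Num.Theory.
Import numFieldNormedType.Exports.

Set Implicit Arguments.
Unset Strict Implicit.
Unset Printing Implicit Defensive.

Local Open Scope classical_set_scope.
Local Open Scope ring_scope.

Record dist (R : realType) (T : finType) := Dist {
  pmf :> T -> R ;
  pmf_ge0 : forall x, 0 <= pmf x ;
  pmf_sum1 : \sum_(x : T) pmf x = 1 }.

(** The points s0, a0 only serve to equip the (nonempty) trajectory space with
    the pointedType structure required by the library; they play no other role. *)
Definition traj (S A : finType) (s0 : S) (a0 : A) := nat -> S * A.
Arguments traj {S A}.
HB.instance Definition _ (S A : finType) (s0 : S) (a0 : A) :=
  Choice.on (traj s0 a0).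
HB.instance Definition _ (S A : finType) (s0 : S) (a0 : A) :=
  isPointed.Build (traj s0 a0) (fun _ => (s0, a0)).

Section Traj.
Variables (S A : finType) (s0 : S) (a0 : A).
Local Notation traj := (traj s0 a0).

(** The product topology on trajectories (each factor finite, discrete):
    U is open iff membership is determined by some finite prefix. *)
Definition traj_open : set (set traj) :=
  [set U | forall xi, U xi -> exists n : nat,
     forall xi', (forall t, (t < n)%N -> xi' t = xi t) -> U xi'].

End Traj.

Notation Xi s0 a0 := (g_sigma_algebraType (@traj_open _ _ s0 a0)).

Section Specs.
Variables (R : realType) (S A : finType) (s0 : S) (a0 : A).
Variables (T : S -> A -> dist R S) (I : dist R S).

Definition policy := S -> dist R A.
Local Notation Xi := (Xi s0 a0).

Definition st (xi : Xi) (t : nat) : S := (xi t).1.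
Definition ac (xi : Xi) (t : nat) : A := (xi t).2.

Definition prefix_prob (pi : policy) (n : nat) (c : nat -> S * A) : R :=
  I (c 0%N).1 * pi (c 0%N).1 (c 0%N).2 *
  \prod_(t < n) (T (c t).1 (c t).2 (c t.+1).1 * pi (c t.+1).1 (c t.+1).2).

(** P is the law of the trajectory generated by pi:
    s_0 ~ I, a_t ~ pi(s_t), s_{t+1} ~ T(s_t,a_t). *)
Definition traj_law (pi : policy) (P : probability Xi R) : Prop :=
  forall (n : nat) (c : nat -> S * A),
    P [set xi : Xi | forall t, (t <= n)%N -> xi t = c t] = (prefix_prob pi n c)%:E.

Definition admissible (h : Xi -> R) : Prop :=
  forall pi P, traj_law pi P -> P.-integrable setT (EFin \o h).

Definition induced (h : Xi -> R) : policy -> policy -> Prop :=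
  fun pi1 pi2 => forall P1 P2, traj_law pi1 P1 -> traj_law pi2 P2 ->
    (\int[P1]_xi (h xi)%:E >= \int[P2]_xi (h xi)%:E)%E.

Definition disc_return (r : S -> A -> S -> R) (g : R) (xi : Xi) : R :=
  limn (fun n => \sum_(t < n) g ^+ t * r (st xi t) (ac xi t) (st xi t.+1)).

Definition Ord_INMR : set (policy -> policy -> Prop) :=
  [set rel | exists (r : S -> A -> S -> R) (f : R -> R) (g : R),
      [/\ 0 <= g < 1, measurable_fun setT f,
          admissible (f \o disc_return r g)
        & rel = induced (f \o disc_return r g)]].

Notation Rk k := (g_sigma_algebraType (@open 'rV[R]_k)).

Definition Ord_IMORL : set (policy -> policy -> Prop) :=
  [set rel | exists (k : nat) (r : S -> A -> S -> 'rV[R]_k) (f : Rk k -> R) (g : R),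
      let G := fun xi : Xi => (\row_(i < k) disc_return (fun s a s' => r s a s' 0 i) g xi
                                : Rk k) in
      [/\ 0 <= g < 1, measurable_fun setT f,
          admissible (f \o G)
        & rel = induced (f \o G)]].

Definition Ord_FTR : set (policy -> policy -> Prop) :=
  [set rel | exists h : Xi -> R,
      [/\ measurable_fun setT h, admissible h & rel = induced h]].

End Specs.

From HB Require Import structures.
From mathcomp Require Import all_boot all_order all_algebra.
From mathcomp Require Import all_classical all_reals all_analysis.
From mathcomp Require Import zify.
Import Order.TTheory GRing.Theory Num.Theory.
Import numFieldNormedType.Exports Num.Def.

Set Implicit Arguments.
Unset Strict Implicit.
Unset Printing Implicit Defensive.

Local Open Scope classical_set_scope.
Local Open Scope ring_scope.

(* Every specification yields an FTR one, because discounted returns are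
   measurable functions of the trajectory: a prefix of length n determines them
   up to O(g^n), so they are continuous for the product topology. INMR embeds
   into IMORL with k = 1. Conversely, any trajectory function h is an INMR
   objective: reward (s_t, a_t) by its index in an enumeration of S * A and
   discount by 1 / (#|S * A| + 1). The return is then the expansion of the
   trajectory in base #|S * A| + 1, which a measurable digit-extraction map
   decodes, so h = (h \o decode) \o return. *)

Section DiscountedSum.
Variables (R : realType) (g : R).
Hypothesis g_ge0 : 0 <= g.
Hypothesis g_lt1 : g < 1.

Definition dsum (u : nat -> R) : R := limn (fun n => \sum_(t < n) g ^+ t * u t).

Implicit Types (u v : nat -> R) (C K : R).

Lemma dsum_cvg u C : (forall t, `|u t| <= C) ->
  cvgn (fun n => \sum_(t < n) g ^+ t * u t).
Proof.
move=> uC; have C0 : 0 <= C := le_trans (normr_ge0 _) (uC 0%N).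
have -> : (fun n => \sum_(t < n) g ^+ t * u t) = series (fun t => g ^+ t * u t).
  by apply/funext => n; rewrite /series /= big_mkord.
apply: normed_cvg; apply: (@series_le_cvg _ _ (geometric C g)) => //= t.
- by rewrite mulr_ge0// exprn_ge0.
- by rewrite normrM normrX ger0_norm// mulrC ler_wpM2r// exprn_ge0.
- by apply: is_cvg_geometric_series; rewrite ger0_norm.
Qed.

Lemma dsumS u C : (forall t, `|u t| <= C) ->
  dsum u = u 0%N + g * dsum (fun t => u t.+1).
Proof.
move=> uC; apply: cvg_lim => //; rewrite -cvg_shiftS /=.
have -> : (fun n => \sum_(t < n.+1) g ^+ t * u t) =
    (fun n => u 0%N + g * \sum_(t < n) g ^+ t * u t.+1).
  apply/funext => n; rewrite big_ord_recl expr0 mul1r mulr_sumr.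
  by congr (_ + _); apply: eq_bigr => t _; rewrite exprS mulrA.
by apply: cvgD; [exact: cvg_cst | apply: cvgMl_tmp; exact: (dsum_cvg (C := C))].
Qed.

Lemma dsum_norm_le u C K : 0 <= K -> C + g * K <= K ->
  (forall t, `|u t| <= C) -> `|dsum u| <= K.
Proof.
move=> K0 CK uC.
have partial_sum_le n : forall v, (forall t, `|v t| <= C) ->
    `|\sum_(t < n) g ^+ t * v t| <= K.
  elim: n => [|n IH] v vC; first by rewrite big_ord0 normr0.
  rewrite big_ord_recl expr0 mul1r (le_trans (ler_normD _ _))// (le_trans _ CK)//.
  rewrite lerD// (eq_bigr (fun t : 'I_n => g * (g ^+ t * v t.+1))); last first.
    by move=> t _; rewrite exprS mulrA.
  by rewrite -mulr_sumr normrM ger0_norm// ler_wpM2l//; exact: (IH (fun t => v t.+1)).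
rewrite ler_norml; apply/andP; split.
- apply: limr_ge; first exact: (dsum_cvg uC).
  by apply: nearW => n; have := partial_sum_le n u uC; rewrite ler_norml => /andP[].
- apply: limr_le; first exact: (dsum_cvg uC).
  by apply: nearW => n; have := partial_sum_le n u uC; rewrite ler_norml => /andP[].
Qed.

Lemma dsum_ge0 u C : (forall t, `|u t| <= C) -> (forall t, 0 <= u t) ->
  0 <= dsum u.
Proof.
move=> uC u0; apply: limr_ge; first exact: (dsum_cvg uC).
by apply: nearW => n; apply: sumr_ge0 => t _; rewrite mulr_ge0// exprn_ge0.
Qed.

Lemma dsum_close u v C K n : 0 <= K -> C + g * K <= K ->
  (forall t, `|u t| <= C) -> (forall t, `|v t| <= C) ->
  (forall t, (t < n)%N -> u t = v t) ->
  `|dsum u - dsum v| <= g ^+ n * (K + K).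
Proof.
move=> K0 CK; elim: n u v => [|n IH] u v uC vC uv.
  rewrite expr0 mul1r (le_trans (ler_normB _ _))// lerD//.
  - exact: dsum_norm_le CK uC.
  - exact: dsum_norm_le CK vC.
rewrite (dsumS uC) (dsumS vC) uv// opprD addrACA subrr add0r -mulrBr normrM.
rewrite ger0_norm// exprS -mulrA ler_wpM2l// IH// => t tn.
exact: uv.
Qed.

End DiscountedSum.

Section Truncation.
Variable R : realType.

Lemma measurable_truncn_gt k : measurable [set x : R | (k < truncn x)%N].
Proof.
have -> : [set x : R | (k < truncn x)%N] = `[k.+1%:R, +oo[%classic.
  by rewrite set_itvcy; apply/funext => x /=; rewrite truncn_gt_nat.
exact: measurable_itv.
Qed.

Lemma measurable_truncn_preimage (K : set nat) : measurable (truncn @^-1` K : set R).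
Proof.
have -> : truncn @^-1` K = \bigcup_(k in K) [set x : R | truncn x = k].
  apply/seteqP; split=> [x Kx | x [k Kk kx]]; first by exists (truncn x).
  by rewrite /= kx.
apply: bigcup_measurable => -[|k] _.
  have -> : [set x : R | truncn x = 0%N] = ~` [set x | (0 < truncn x)%N].
    by apply/funext => x; apply/propext; rewrite /= lt0n; split => [->|/negP/negPn/eqP].
  by apply: measurableC; exact: measurable_truncn_gt.
have -> : [set x : R | truncn x = k.+1] =
    [set x | (k < truncn x)%N] `\` [set x | (k.+1 < truncn x)%N].
  by apply/funext => x; apply/propext; rewrite /setD /=; split => [->|[]]; lia.
by apply: measurableD; exact: measurable_truncn_gt.
Qed.

Lemma measurable_fun_truncn : measurable_fun setT (fun x : R => (truncn x)%:R : R).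
Proof.
by move=> _ B _; rewrite setTI; exact: (measurable_truncn_preimage [set k | B k%:R]).
Qed.

End Truncation.

Section Encoding.
Variables (R : realType) (T : finType) (c0 : T).
Local Notation n := #|T|.

Definition digit (c : T) : R := (enum_rank c : nat)%:R.

(* Base n + 1 with digits at most n - 1: the tail of an expansion stays below 1,
   so truncation reads off the leading digit. *)
Definition code_ratio : R := n.+1%:R^-1.

Definition shift_digits (x : R) : R := n.+1%:R * (x - (truncn x)%:R).

Definition encode (xi : nat -> T) : R := dsum code_ratio (fun t => digit (xi t)).

Definition decode (x : R) : nat -> T :=
  fun t => odflt c0 [pick c | enum_rank c == truncn (iter t shift_digits x) :> nat].

Lemma card_gt0 : (0 < n)%N.
Proof. exact: leq_ltn_trans (leq0n _) (ltn_ord (enum_rank c0)). Qed.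

Lemma code_ratio_ge0 : 0 <= code_ratio.
Proof. by rewrite invr_ge0. Qed.

Lemma code_ratio_lt1 : code_ratio < 1.
Proof. by rewrite invf_lt1 ?ltr0n// ltr1n ltnS card_gt0. Qed.

Lemma code_ratio_card_lt1 : code_ratio * n%:R < 1.
Proof. by rewrite mulrC ltr_pdivrMr ?ltr0n// mul1r ltr_nat. Qed.

Lemma digit_norm_le c : `|digit c| <= n.-1%:R.
Proof.
by rewrite ger0_norm// ler_nat -ltnS prednK ?card_gt0// ltn_ord.
Qed.

Lemma card_supersolution : n.-1%:R + code_ratio * n%:R <= n%:R.
Proof.
apply: le_trans (lerD (lexx _) (ltW code_ratio_card_lt1)) _.
by rewrite natr1 prednK ?card_gt0.
Qed.

Lemma encodeS xi : encode xi = digit (xi 0%N) + code_ratio * encode (fun t => xi t.+1).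
Proof. exact: (dsumS code_ratio_ge0 code_ratio_lt1 (fun t => digit_norm_le (xi t))). Qed.

Lemma encode_ge0 xi : 0 <= encode xi.
Proof.
exact: (dsum_ge0 code_ratio_ge0 code_ratio_lt1 (fun t => digit_norm_le (xi t))).
Qed.

Lemma encode_le xi : encode xi <= n%:R.
Proof.
apply: le_trans (ler_norm _) _.
exact: (dsum_norm_le code_ratio_ge0 code_ratio_lt1 _ card_supersolution
  (fun t => digit_norm_le (xi t))).
Qed.

Lemma truncn_encode xi : truncn (encode xi) = enum_rank (xi 0%N).
Proof.
set tail := code_ratio * encode (fun t => xi t.+1).
have tail_ge0 : 0 <= tail by rewrite mulr_ge0 ?code_ratio_ge0 ?encode_ge0.
have tail_lt1 : tail < 1.
  by apply: le_lt_trans code_ratio_card_lt1; rewrite ler_wpM2l ?code_ratio_ge0 ?encode_le.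
apply: truncn_def; rewrite encodeS -/tail /digit -natr1 lerDl tail_ge0 /=.
by rewrite ltrD2l.
Qed.

Lemma shift_digits_encode xi : shift_digits (encode xi) = encode (fun t => xi t.+1).
Proof.
rewrite /shift_digits truncn_encode {1}encodeS /digit addrAC subrr add0r mulrA.
by rewrite /code_ratio mulfV ?mul1r.
Qed.

Lemma decode_encode xi : decode (encode xi) = xi.
Proof.
apply/funext => t; rewrite /decode.
have -> : iter t shift_digits (encode xi) = encode (fun s => xi (t + s)%N).
  elim: t => [|t IH] //=; rewrite IH shift_digits_encode.
  by congr encode; apply/funext => s; rewrite addSnnS.
rewrite truncn_encode addn0; case: pickP => [c /eqP/ord_inj/enum_rank_inj //|].
by move/(_ (xi t)); rewrite eqxx.
Qed.

Lemma measurable_fun_shift_digits : measurable_fun setT shift_digits.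
Proof.
apply: measurable_realfun.measurable_funM => //.
apply: measurable_realfun.measurable_funB => //.
exact: measurable_fun_truncn.
Qed.

Lemma measurable_decode_coord t c : measurable [set x | decode x t = c].
Proof.
have iter_shift_digits : measurable_fun setT (iter t shift_digits).
  elim: t => [|t IH]; first exact: measurable_id.
  exact: measurableT_comp measurable_fun_shift_digits IH.
have := iter_shift_digits measurableT _ (measurable_truncn_preimage
  [set k | odflt c0 [pick c' | enum_rank c' == k :> nat] = c]).
by rewrite setTI.
Qed.

End Encoding.

Section Trajectories.
Variables (R : realType) (S A : finType) (s0 : S) (a0 : A).
Local Notation Xi := (Xi s0 a0).

(* Cylinder sets generate the sigma-algebra: an open set is the union of the
   cylinders over the finite prefixes all of whose extensions it contains. *)
Lemma measurable_fun_traj d (X : measurableType d) (f : X -> Xi) :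
  (forall t c, measurable [set x | f x t = c]) -> measurable_fun setT f.
Proof.
move=> mf; apply: (@measurability _ _ _ _ setT f (@traj_open S A s0 a0)) => //.
move=> _ [U oU <-]; rewrite setTI.
have -> : f @^-1` U = \bigcup_n
    [set x | forall xi : Xi, (forall t, (t < n)%N -> xi t = f x t) -> U xi].
  apply/seteqP; split => [x Ufx | x [n _ H]]; last exact: H.
  by have [n Hn] := oU _ Ufx; exists n.
apply: bigcupT_measurable => n.
have -> : [set x | forall xi : Xi, (forall t, (t < n)%N -> xi t = f x t) -> U xi] =
    \bigcup_(p in [set p : {ffun 'I_n -> S * A} |
                    forall xi : Xi, (forall t : 'I_n, xi t = p t) -> U xi])
      \bigcap_(t in [set: 'I_n]) [set x | f x t = p t].
  apply/seteqP; split => [x Hx | x [p Up fp] xi xi_f].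
    exists [ffun t : 'I_n => f x t]; last by move=> t _ /=; rewrite ffunE.
    by move=> xi xi_p; apply: Hx => t tn; rewrite (xi_p (Ordinal tn)) ffunE.
  by apply: Up => t; rewrite xi_f ?ltn_ord // (fp t Logic.I).
apply: fin_bigcup_measurable; first exact: finite_finset.
move=> p _; apply: fin_bigcap_measurable; first exact: finite_finset.
by move=> t _; exact: mf.
Qed.

Lemma measurable_fun_prefix_continuous (V : normedModType R) (f : Xi -> V) :
  (forall xi e, 0 < e -> exists n, forall xi' : Xi,
     (forall t, (t < n)%N -> xi' t = xi t) -> ball (f xi) e (f xi')) ->
  @measurable_fun _ _ Xi (g_sigma_algebraType (@open V)) setT f.
Proof.
move=> fcont.
apply: (@measurability _ _ Xi (g_sigma_algebraType (@open V)) setT f (@open V)) => //.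
move=> _ [U oU <-]; rewrite setTI; apply: sub_sigma_algebra => xi Ufxi.
have /nbhs_ballP[e e0 eU] := @open_nbhs_nbhs _ _ _ (conj oU Ufxi).
by have [n Hn] := fcont xi e e0; exists n => xi' xi'_xi; apply: eU; exact: Hn.
Qed.

Lemma disc_returnE (r : S -> A -> S -> R) g (xi : Xi) :
  disc_return r g xi = dsum g (fun t => r (st xi t) (ac xi t) (st xi t.+1)).
Proof. by []. Qed.

Lemma disc_return_close (r : S -> A -> S -> R) g C n (xi xi' : Xi) :
  0 <= g -> g < 1 -> (forall s a s', `|r s a s'| <= C) ->
  (forall t, (t < n.+1)%N -> xi' t = xi t) ->
  `|disc_return r g xi - disc_return r g xi'| <= g ^+ n * (C / (1 - g) *+ 2).
Proof.
move=> g0 g1 rC agree; have C0 : 0 <= C := le_trans (normr_ge0 _) (rC s0 a0 s0).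
set K := C / (1 - g); have K0 : 0 <= K by rewrite divr_ge0// subr_ge0 ltW.
have CK : C + g * K <= K.
  have -> : C = K * (1 - g) by rewrite mulfVK// subr_eq0 gt_eqF.
  by rewrite mulrBr mulr1 [g * K]mulrC subrK.
rewrite mulr2n !disc_returnE; apply: dsum_close K0 CK _ _ _ => // t tn.
by rewrite /st /ac !agree// ltnS ltnW.
Qed.

End Trajectories.

Lemma measurable_fun_continuous (R : realType) (V : ptopologicalType) (f : V -> R) :
  continuous f -> @measurable_fun _ _ (g_sigma_algebraType (@open V)) R setT f.
Proof.
move=> fcont; apply: (@measurability _ _ (g_sigma_algebraType (@open V)) R setT f
  _ (measurable_realfun.RGenOpens.measurableE R)).
move=> _ [_ [a [b ->]] <-]; rewrite setTI; apply: sub_sigma_algebra.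
by move/continuousP: fcont; apply; exact: interval_open.
Qed.

Lemma exists_expr_lt (R : realType) (g M e : R) : 0 <= g -> g < 1 -> 0 < e ->
  exists n, g ^+ n * M < e.
Proof.
move=> g0 g1 e0; have : g ^+ n * M @[n --> \oo] --> 0.
  by rewrite -(mul0r M); apply: cvgMr_tmp; apply: cvg_expr; rewrite ger0_norm.
move=> /cvgr0_norm_lt/(_ e e0)[N _ HN]; exists N.
exact: le_lt_trans (ler_norm _) (HN N (leqnn N)).
Qed.

Section Inclusions.
Variables (R : realType) (S A : finType) (s0 : S) (a0 : A).
Variables (T : S -> A -> dist R S) (I : dist R S).
Local Notation Xi := (Xi s0 a0).
Local Notation SA := (S * A)%type.

Lemma Ord_INMR_sub_IMORL : Ord_INMR s0 a0 T I `<=` Ord_IMORL s0 a0 T I.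
Proof.
move=> rel [r [f [g [g01 mf adm ->]]]].
exists 1%N, (fun s a s' => const_mx (r s a s')),
  (fun v : g_sigma_algebraType (@open 'rV[R]_1) => f (v 0 0)), g; cbv zeta.
rewrite (_ : _ \o _ = f \o disc_return r g); last first.
  apply/funext => xi /=; rewrite mxE; congr (f (disc_return _ _ _)).
  by apply/funext => s; apply/funext => a; apply/funext => s'; rewrite mxE.
split => //; apply: measurableT_comp mf _.
apply: measurable_fun_continuous; exact: coord_continuous.
Qed.

Lemma measurable_fun_disc_return_row k (r : S -> A -> S -> 'rV[R]_k) g :
  0 <= g < 1 ->
  @measurable_fun _ _ Xi (g_sigma_algebraType (@open 'rV[R]_k)) setT
    (fun xi => \row_(i < k) disc_return (fun s a s' => r s a s' 0 i) g xi).
Proof.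
case/andP => g0 g1; apply: measurable_fun_prefix_continuous => xi e e0.
pose C := \sum_(x : S * A * S * 'I_k) `|r x.1.1.1 x.1.1.2 x.1.2 0 x.2|.
have rC i s a s' : `|r s a s' 0 i| <= C.
  by rewrite /C (bigD1 (s, a, s', i))//= lerDl sumr_ge0.
have [n small] := exists_expr_lt (C / (1 - g) *+ 2) g0 g1 e0.
exists n.+1 => xi' agree; split=> // i j; rewrite !mxE /ball /=.
exact: le_lt_trans (disc_return_close g0 g1 (rC j) agree) small.
Qed.

Lemma Ord_IMORL_sub_FTR : Ord_IMORL s0 a0 T I `<=` Ord_FTR s0 a0 T I.
Proof.
move=> rel [k [r [f [g]]]]; cbv zeta => -[g01 mf adm ->].
eexists; split; [|exact: adm|reflexivity].
exact: measurableT_comp mf (measurable_fun_disc_return_row r g01).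
Qed.

Lemma Ord_FTR_sub_INMR : Ord_FTR s0 a0 T I `<=` Ord_INMR s0 a0 T I.
Proof.
move=> rel [h [mh adm ->]].
pose c0 : SA := (s0, a0).
exists (fun s a _ => digit R (s, a)), (h \o decode (R := R) c0), (code_ratio R SA).
have -> : h \o decode (R := R) c0 \o
    disc_return (fun s a _ => digit R (s, a)) (code_ratio R SA) = h.
  apply/funext => xi /=; rewrite disc_returnE.
  have -> : dsum (code_ratio R SA) (fun t => digit R (st xi t, ac xi t)) =
      encode R xi.
    by congr dsum; apply/funext => t; rewrite /st /ac -surjective_pairing.
  by rewrite decode_encode.
split => //; first by rewrite code_ratio_ge0 (code_ratio_lt1 R c0).
apply: measurableT_comp mh _; apply: measurable_fun_traj => t c.
exact: measurable_decode_coord.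
Qed.

End Inclusions.

Theorem theorem1 (R : realType) (S A : finType) (s0 : S) (a0 : A)
    (T : S -> A -> dist R S) (I : dist R S) :
  Ord_INMR s0 a0 T I = Ord_IMORL s0 a0 T I /\
  Ord_IMORL s0 a0 T I = Ord_FTR s0 a0 T I.
Proof.
have INMR_IMORL := @Ord_INMR_sub_IMORL R S A s0 a0 T I.
have IMORL_FTR := @Ord_IMORL_sub_FTR R S A s0 a0 T I.
have FTR_INMR := @Ord_FTR_sub_INMR R S A s0 a0 T I.
split; apply/seteqP; split => // rel.
- by move/IMORL_FTR/FTR_INMR.
- by move/FTR_INMR/INMR_IMORL.
Qed.
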